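(* Let $X$ be a continuum, let $n\geq 2$ be an integer, and let $f:X\to X$ be a map. Consider the statements: (1) $f$ is $\mathbb{Z}$-transitive; (2) $F_n(f)$ is $\mathbb{Z}$-transitive; (3) $SF_n(f)$ is $\mathbb{Z}$-transitive. Then (2) and (3) are equivalent and (2) implies (1). Moreover, (1) does not imply (2) in general: there exist a continuum $X$, an integer $n\geq2$ and a map $f:X\to X$ that is $\mathbb{Z}$-transitive while $F_n(f)$ is not.
   Context: A continuum is a nonempty compact connected metric space. For $n\in\mathbb{N}$, $F_n(X)$ is the set of nonempty subsets of $X$ with at most $n$ points, with the Vietoris (Hausdorff metric) topology; $F_1(X)=\{\{x\}:x\in X\}$; $F_n(f)(A)=f(A)$. For $n\geq2$, $SF_n(X)=F_n(X)/F_1(X)$ is the quotient space collapsing $F_1(X)$ to a point, $q$ the quotient map, $F_X=q(F_1(X))$, and $SF_n(f)(\chi)=q(F_n(f)(q^{-1}(\chi)))$ for $\chi\neq F_X$, $SF_n(f)(F_X)=F_X$. A map $g:Z\to Z$ is $\mathbb{Z}$-transitive if for any nonempty open $U,V\subseteq Z$ there is $k\in\mathbb{Z}$ with $g^k(U)\cap V\neq\emptyset$, where for $k<0$, $g^k(U)$ means $(g^{-k})^{-1}(U)$ and $g^0$ is the identity. *)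

From HB Require Import structures.
From mathcomp Require Import all_boot all_order all_algebra.
From mathcomp Require Import all_classical all_reals all_analysis.
Set Implicit Arguments. Unset Strict Implicit. Unset Printing Implicit Defensive.
Import Order.TTheory GRing.Theory Num.Theory.
Local Open Scope classical_set_scope.
Local Open Scope ring_scope.

Definition continuum (R : realType) (X : metricType R) : Prop :=
  [set: X] !=set0 /\ compact [set: X] /\ connected [set: X].

Definition Fn (X : choiceType) (n : nat) : set (set X) :=
  [set A | A !=set0 /\ exists s : seq X, (size s <= n)%N /\ (forall x, A x <-> x \in s)].

Definition vietoris_basic (X : Type) (m : nat) (U : 'I_m -> set X) : set (set X) :=
  [set A | (forall x, A x -> exists i, U i x) /\ (forall i, exists x, A x /\ U i x)].

Definition Fn_open (X : topologicalType) (n : nat) (W : set (set X)) : Prop :=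
  W `<=` @Fn X n /\
  forall A, W A -> exists (m : nat) (U : 'I_m -> set X),
    (forall i, open (U i)) /\ vietoris_basic U A /\
    (vietoris_basic U `&` @Fn X n `<=` W).

Definition Fn_map (X : Type) (f : X -> X) (A : set X) : set X := f @` A.

(* SF_n(X) = F_n(X)/F_1(X), modelled inside option (set X):
   None is the collapsed point F_X, Some A is the class {A} of a non-singleton A. *)
Definition qSF (X : Type) (A : set X) : option (set X) :=
  if pselect (exists x, A = [set x]) then None else Some A.

Definition SFn (X : choiceType) (n : nat) : set (option (set X)) := (@qSF X) @` @Fn X n.

Definition SFn_open (X : topologicalType) (n : nat) (W : set (option (set X))) : Prop :=
  W `<=` @SFn X n /\ @Fn_open X n (@Fn X n `&` (@qSF X) @^-1` W).

Definition SFn_map (X : Type) (f : X -> X) (c : option (set X)) : option (set X) :=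
  match c with None => None | Some A => qSF (f @` A) end.

Definition iterZ_img (T : Type) (g : T -> T) (k : int) (U : set T) : set T :=
  match k with
  | Posz m => iter m g @` U
  | Negz m => iter m.+1 g @^-1` U
  end.

Definition Ztransitive_on (T : Type) (D : set T) (isopen : set T -> Prop) (g : T -> T) : Prop :=
  forall U V, U `<=` D -> V `<=` D -> isopen U -> isopen V ->
    U !=set0 -> V !=set0 -> exists k : int, iterZ_img g k U `&` V !=set0.

Definition Ztransitive (X : topologicalType) (f : X -> X) : Prop :=
  Ztransitive_on [set: X] open f.

Definition Fn_Ztransitive (X : topologicalType) (n : nat) (f : X -> X) : Prop :=
  Ztransitive_on (@Fn X n) (@Fn_open X n) (@Fn_map X f).

Definition SFn_Ztransitive (X : topologicalType) (n : nat) (f : X -> X) : Prop :=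
  Ztransitive_on (@SFn X n) (@SFn_open X n) (@SFn_map X f).

From HB Require Import structures.
From mathcomp Require Import all_boot all_order all_algebra.
From mathcomp Require Import all_classical all_reals all_analysis.
From mathcomp Require Import lra.
Set Implicit Arguments. Unset Strict Implicit. Unset Printing Implicit Defensive.
Import Order.TTheory GRing.Theory Num.Theory numFieldNormedType.Exports.
Local Open Scope classical_set_scope.
Local Open Scope ring_scope.

(** The quotient map [qSF] semiconjugates F_n(f) to SF_n(f), so Z-transitivity
  passes from F_n(f) to its factor SF_n(f). Conversely [qSF] is injective away
  from the singletons, and in a continuum other than a point no singleton is
  open, so every nonempty open set of F_n(X) contains non-singletons; this lifts
  Z-transitivity back from SF_n(f) to F_n(f). Testing F_n(f) on the open sets of
  nonempty subsets of U and of V gives the Z-transitivity of f.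

  For the counterexample, [zigzag] is the piecewise linear map of [0, 1] with
  slopes 2, -2, 2 and turning points 1/4 and 3/4. It exchanges [0, 1/2] and
  [1/2, 1], so no forward or backward iterate of F_2(zigzag) can move the
  nonempty subsets of [0, 1/4) to a set meeting both [0, 1/4) and (3/4, 1].
  Yet it expands every interval until one of the two halves is covered, after
  which one more step covers the other half: zigzag itself is Z-transitive. *)

Section iterZ.
Variables (T : Type) (g : T -> T).

Lemma iterZ_img_subset k (U V : set T) :
  U `<=` V -> iterZ_img g k U `<=` iterZ_img g k V.
Proof. by case: k => m UV x /=; [case=> y /UV Vy <-; exists y | exact: UV]. Qed.

Lemma iterZ_img0 (U : set T) : iterZ_img g 0 U = U.
Proof. exact: image_id. Qed.

Lemma Ztransitive_on_subsingleton (D : set T) (isopen : set T -> Prop) :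
  (forall x y, D x -> D y -> x = y) -> Ztransitive_on D isopen g.
Proof.
move=> D1 U V UD VD _ _ [u Uu] [v Vv]; exists 0; rewrite iterZ_img0.
by exists u; split=> //; rewrite (D1 u v (UD u Uu) (VD v Vv)).
Qed.

End iterZ.

Section semiconjugacy.
Variables (S T : Type) (q : S -> T) (g : S -> S) (h : T -> T).
Hypothesis qgh : forall x, q (g x) = h (q x).

Lemma iter_semiconj k x : q (iter k g x) = iter k h (q x).
Proof. by elim: k => //= k <-. Qed.

Lemma iterZ_img_semiconj k (U : set T) :
  iterZ_img g k (q @^-1` U) `<=` q @^-1` iterZ_img h k U.
Proof.
case: k => m x /=; last by have /= <- := iter_semiconj m.+1 x.
by case=> y Uy <-; exists (q y) => //; rewrite iter_semiconj.
Qed.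

Lemma iterZ_img_semiconj_inj (N W : set S) k b :
  (forall x a, N a -> q x = q a -> x = a) -> N b ->
  iterZ_img h k (q @` (W `&` N)) (q b) -> iterZ_img g k W b.
Proof.
move=> qinj Nb; case: k => m /=.
  case=> _ [a [Wa _] <-]; rewrite -iter_semiconj => /qinj <- //.
  by exists a.
by have /= <- := iter_semiconj m.+1 b; case=> a [Wa Na] /esym /qinj ->.
Qed.

Lemma Ztransitive_on_factor (D : set S) (E : set T)
    (openS : set S -> Prop) (openT : set T -> Prop) :
  E `<=` q @` D -> (forall W, W `<=` E -> openT W -> openS (D `&` q @^-1` W)) ->
  Ztransitive_on D openS g -> Ztransitive_on E openT h.
Proof.
move=> EqD open_pre gtr U V UE VE oU oV [u Uu] [v Vv].
have nonempty_pre (W : set T) w : W `<=` E -> W w -> D `&` q @^-1` W !=set0.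
  move=> WE Ww; have [x Dx xw] := EqD w (WE w Ww).
  by exists x; rewrite /preimage /= xw.
have [k [x [Ux [_ Vqx]]]] := gtr _ _ (@subIsetl _ _ _) (@subIsetl _ _ _)
  (open_pre U UE oU) (open_pre V VE oV)
  (nonempty_pre U u UE Uu) (nonempty_pre V v VE Vv).
exists k, (q x); split=> //.
by apply: iterZ_img_semiconj; apply: iterZ_img_subset Ux; apply: subIsetr.
Qed.

End semiconjugacy.

Lemma Fn_set1 (X : choiceType) n (x : X) : (0 < n)%N -> Fn n [set x].
Proof.
move=> n0; split; first by exists x.
by exists [:: x]; split=> // y; rewrite inE; split=> [->|/eqP].
Qed.

Lemma Fn_set2 (X : choiceType) n (x y : X) : (1 < n)%N -> Fn n [set x; y].
Proof.
move=> n1; split; first by exists x; left.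
exists [:: x; y]; split=> // z; rewrite !inE.
by split=> [[|] ->|/orP[|] /eqP]; rewrite ?eqxx ?orbT; [..|left|right].
Qed.

Lemma iter_Fn_map (T : Type) (f : T -> T) k (A : set T) :
  iter k (Fn_map f) A = iter k f @` A.
Proof. by elim: k => [|k IH] /=; rewrite ?image_id // IH /Fn_map image_comp. Qed.

Section vietoris.
Variable X : topologicalType.

Definition vietoris1 (W : set X) : set (set X) := vietoris_basic (fun _ : 'I_1 => W).

Definition vietoris2 (W1 W2 : set X) : set (set X) :=
  vietoris_basic (fun i : 'I_2 => if i == ord0 then W1 else W2).

Lemma vietoris1P (W A : set X) : vietoris1 W A <-> A `<=` W /\ A !=set0.
Proof.
split=> [[AW /(_ ord0) [x [Ax _]]]|[AW [x Ax]]].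
  by split=> [y /AW []|]; last exists x.
by split=> [y /AW Wy|_]; [exists ord0 | exists x; split; last exact: AW].
Qed.

Lemma vietoris2P (W1 W2 A : set X) :
  vietoris2 W1 W2 A <-> [/\ A `<=` W1 `|` W2, A `&` W1 !=set0 & A `&` W2 !=set0].
Proof.
split=> [[AW AWi]|[AW [x1 Ax1] [x2 Ax2]]].
  split; first by move=> x /AW [i]; case: ifP => _; [left|right].
  - by have [x] := AWi ord0; exists x.
  - by have [x] := AWi (@Ordinal 2 1 isT); exists x.
split=> [x /AW [W1x|W2x]|[[|[|//]] ?]].
- by exists ord0.
- by exists (@Ordinal 2 1 isT).
- by exists x1.
- by exists x2.
Qed.

Lemma Fn_open_vietoris (n m : nat) (U : 'I_m -> set X) :
  (forall i, open (U i)) -> Fn_open n (vietoris_basic U `&` Fn n).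
Proof. by move=> oU; split=> [A [_ FA] //|A [UA _]]; exists m, U; split; [|split]. Qed.

Lemma vietoris_basicI m l (U : 'I_m -> set X) (V : 'I_l -> set X) (A : set X) :
  (forall i, open (U i)) -> (forall j, open (V j)) ->
  vietoris_basic U A -> vietoris_basic V A ->
  exists k (W : 'I_k -> set X), [/\ forall i, open (W i), vietoris_basic W A &
    vietoris_basic W `<=` vietoris_basic U `&` vietoris_basic V].
Proof.
move=> oU oV [AU UA] [AV VA].
pose cupU := \bigcup_(i in setT) U i; pose cupV := \bigcup_(j in setT) V j.
pose W i := match fintype.split i with
  | inl i => U i `&` cupV | inr j => V j `&` cupU end.
have WE i : W (lshift l i) = U i `&` cupV by rewrite /W -/(unsplit (inl i)) unsplitK.
have WE' j : W (rshift m j) = V j `&` cupU by rewrite /W -/(unsplit (inr j)) unsplitK.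
have Wcup i : W i `<=` cupU `&` cupV.
  by rewrite /W; case: fintype.split => j x [] ? ?; split=> //; exists j.
exists (m + l)%N, W; split.
- move=> i; rewrite /W; case: fintype.split => j; apply: openI => //;
    by apply: bigcup_open => ? _.
- split=> [x Ax|i].
    have [i Ui] := AU x Ax; have [j Vj] := AV x Ax.
    by exists (lshift l i); rewrite WE; split=> //; exists j.
  rewrite /W; case: fintype.split => j.
    have [x [Ax Ux]] := UA j; have [j' Vx] := AV x Ax.
    by exists x; split=> //; split=> //; exists j'.
  have [x [Ax Vx]] := VA j; have [i' Ux] := AU x Ax.
  by exists x; split=> //; split=> //; exists i'.
- move=> B [BW WB]; split; split.
  + by move=> x /BW [i /Wcup [[j _ Ux] _]]; exists j.
  + by move=> i; have [x [Bx]] := WB (lshift l i); rewrite WE => -[]; exists x.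
  + by move=> x /BW [i /Wcup [_ [j _ Vx]]]; exists j.
  + by move=> j; have [x [Bx]] := WB (rshift m j); rewrite WE' => -[]; exists x.
Qed.

Lemma Fn_openI (n : nat) (W1 W2 : set (set X)) :
  Fn_open n W1 -> Fn_open n W2 -> Fn_open n (W1 `&` W2).
Proof.
move=> [W1F oW1] [_ oW2]; split=> [A [/W1F]//|A [W1A W2A]].
have [m [U [oU [UA UW1]]]] := oW1 A W1A; have [l [V [oV [VA VW2]]]] := oW2 A W2A.
have [k [W [oW WA WUV]]] := vietoris_basicI oU oV UA VA.
exists k, W; do 2!split=> //; move=> B [/WUV [UB VB] FB].
by split; [apply: UW1 | apply: VW2].
Qed.

End vietoris.

Lemma iterZ_img_Fn_map (T : Type) (f : T -> T) k (W : set (set T)) (U : set T) B :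
  (forall A, W A -> A `<=` U) -> iterZ_img (Fn_map f) k W B -> B `<=` iterZ_img f k U.
Proof.
move=> WU; case: k => m /=.
  by case=> A /WU AU <-; rewrite iter_Fn_map; apply: image_subset.
move=> /WU; rewrite -/(iter m.+1 (Fn_map f) B) iter_Fn_map => iBU b Bb.
exact: iBU (imageP _ Bb).
Qed.

Lemma Fn_Ztransitive_Ztransitive (X : topologicalType) n (f : X -> X) :
  (0 < n)%N -> Fn_Ztransitive n f -> Ztransitive f.
Proof.
move=> n0 Ftr U V _ _ oU oV [u Uu] [v Vv].
have nonempty (W : set X) w : W w -> vietoris1 W `&` Fn n !=set0.
  move=> Ww; exists [set w]; split; last exact: Fn_set1.
  by apply/vietoris1P; split=> [? ->//|]; exists w.
have [k [B [UkB [VB _]]]] := Ftr _ _ (@subIsetr _ _ _) (@subIsetr _ _ _)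
  (Fn_open_vietoris n (fun=> oU)) (Fn_open_vietoris n (fun=> oV))
  (nonempty _ _ Uu) (nonempty _ _ Vv).
move/vietoris1P: VB => [BV [b Bb]].
exists k, b; split; last exact: BV.
by apply: iterZ_img_Fn_map UkB b Bb => A [/vietoris1P []].
Qed.

Definition nonsingleton (T : Type) (A : set T) := ~ exists x, A = [set x].

Lemma qSF_nonsingleton (T : Type) (A : set T) : nonsingleton A -> qSF A = Some A.
Proof. by rewrite /qSF; case: pselect. Qed.

Lemma qSF_inj (T : Type) (A B : set T) : nonsingleton B -> qSF A = qSF B -> A = B.
Proof. by move/qSF_nonsingleton ->; rewrite /qSF; case: pselect => // _ []. Qed.

Lemma qSF_semiconj (T : Type) (f : T -> T) (A : set T) :
  qSF (Fn_map f A) = SFn_map f (qSF A).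
Proof.
rewrite [in RHS]/qSF; case: pselect => [[x Ax]|//] /=.
by rewrite Ax /Fn_map image_set1 /qSF; case: pselect => // -[]; exists (f x).
Qed.

Lemma Fn_SFn_Ztransitive (X : topologicalType) n (f : X -> X) :
  Fn_Ztransitive n f -> SFn_Ztransitive n f.
Proof. by apply: (Ztransitive_on_factor (@qSF_semiconj X f)) => // W _ []. Qed.

Lemma nonsingletonP (T : Type) (A : set T) a :
  A a -> nonsingleton A -> exists2 b, A b & b <> a.
Proof.
move=> Aa nsA; apply: contrapT => /forall2NP one; apply: nsA; exists a.
by apply/seteqP; split=> [b Ab|_ ->//]; have [//|] := one b; apply: contrapT.
Qed.

Lemma nonsingleton2 (T : Type) (A : set T) a b :
  A a -> A b -> a <> b -> nonsingleton A.
Proof. by move=> Aa Ab ab [x Ax]; apply: ab; move: Aa Ab; rewrite Ax => -> ->. Qed.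

Lemma connected_open_set1 (X : topologicalType) (x : X) :
  accessible_space X -> connected [set: X] -> open [set x] -> [set x] = [set: X].
Proof.
move=> T1 cX ox; apply: cX; first by exists x.
- by exists [set x]; rewrite ?setTI.
- by exists [set x]; rewrite ?setTI //; exact: accessible_closed_set1.
Qed.

Section nonsingleton_sets.
Variables (X : topologicalType) (n : nat).

Lemma Fn_open_nonsingleton :
  hausdorff_space X -> Fn_open n (Fn n `&` @nonsingleton X).
Proof.
rewrite open_hausdorff => T2; split=> [A []//|A [FA nsA]].
have [[a Aa] _] := FA; have [b Ab ba] := nonsingletonP Aa nsA.
have /T2[[Oa Ob] /=] : a != b by apply/eqP => ab; apply: ba.
rewrite !inE => -[Oaa Obb] [oOa oOb OaOb0].
have disj z : Oa z -> Ob z -> False.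
  by move=> ? ?; have : (Oa `&` Ob) z by []; rewrite OaOb0.
have vietoris2T (O : set X) c : open O -> A c -> O c -> vietoris2 O setT A.
  by move=> oO Ac Oc; apply/vietoris2P; split; [move=> y _; right | exists c | exists a].
have oOT (O : set X) : open O -> forall i : 'I_2, open (if i == ord0 then O else setT).
  by move=> oO i; case: ifP => _; [exact: oO | exact: openT].
have [k [W [oW WA WOab]]] := vietoris_basicI (oOT _ oOa) (oOT _ oOb)
  (vietoris2T _ _ oOa Aa Oaa) (vietoris2T _ _ oOb Ab Obb).
exists k, W; do 2!split=> //; move=> B [/WOab [/vietoris2P [_ [x [Bx Oax]] _]]].
move=> /vietoris2P [_ [y [By Oby]] _] FB; split=> //.
by apply: (nonsingleton2 Bx By) => xy; apply: (disj x) => //; rewrite xy.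
Qed.

Lemma Fn_open_meets_nonsingleton (W : set (set X)) :
  (1 < n)%N -> (forall x : X, ~ open [set x]) -> Fn_open n W -> W !=set0 ->
  W `&` @nonsingleton X !=set0.
Proof.
move=> n1 noiso [WF oW] [A WA].
have [[x Ax]|nsA] := pselect (exists x, A = [set x]); last by exists A.
have [m [U [oU [[AU UA] UW]]]] := oW A WA.
have Ux i : U i x by have [y []] := UA i; rewrite Ax => ->.
have [z zx Uz] : exists2 z, z <> x & forall i, U i z.
  apply: contrapT => /forall2NP nz; apply: (noiso x); rewrite openE => _ ->.
  have : \forall y \near x, forall i, U i y.
    apply: filter_forall => i; apply: open_nbhs_nbhs.
    by split; [exact: oU | exact: Ux].
  by apply: filterS => y Uy; have [/contrapT ->//|] := nz y.
have [i0 _] : exists i, U i x by apply: AU; rewrite Ax.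
exists [set x; z]; split; last first.
  by apply: (@nonsingleton2 _ _ x z); [left | right | apply/nesym].
apply: UW; split; last exact: Fn_set2.
by split=> [y [->|->]|i]; [exists i0 | exists i0 | exists x; split; [left|]].
Qed.

Lemma qSF_preimage (W : set (set X)) : W `<=` Fn n ->
  Fn n `&` @qSF X @^-1` (@qSF X @` (W `&` @nonsingleton X)) = W `&` @nonsingleton X.
Proof.
move=> WF; apply/seteqP; split=> [B [FB [A [WA nsA] /esym/(qSF_inj nsA) ->]]//|].
by move=> B [WB nsB]; split; [exact: WF | exists B].
Qed.

Lemma SFn_open_qSF (W : set (set X)) : hausdorff_space X -> Fn_open n W ->
  SFn_open n (@qSF X @` (W `&` @nonsingleton X)).
Proof.
move=> T2 oW; split; first by move=> _ [A [WA _] <-]; exists A => //; exact: oW.1.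
rewrite qSF_preimage; last exact: oW.1.
rewrite -(setIidl oW.1) -setIA.
by apply: Fn_openI => //; exact: Fn_open_nonsingleton.
Qed.

End nonsingleton_sets.

Lemma SFn_Fn_Ztransitive (X : topologicalType) n (f : X -> X) :
  hausdorff_space X -> connected [set: X] -> (1 < n)%N ->
  SFn_Ztransitive n f -> Fn_Ztransitive n f.
Proof.
move=> T2 cX n1 SFtr.
have [[x Xx]|noiso] := pselect (exists x : X, [set x] = [set: X]).
  apply: Ztransitive_on_subsingleton => A B FA FB.
  suff Ex (E : set X) : Fn n E -> E = [set x] by rewrite (Ex A FA) (Ex B FB).
  move=> [[e Ee] _]; apply/seteqP; split=> [y _|_ ->]; first by rewrite Xx.
  by have /= <- : [set x] e by rewrite Xx.
have noiso' (x : X) : ~ open [set x].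
  move=> /(connected_open_set1 (hausdorff_accessible T2) cX) Xx.
  by apply: noiso; exists x.
move=> U V UF VF oU oV neU neV.
have nsU := Fn_open_meets_nonsingleton n1 noiso' oU neU.
have nsV := Fn_open_meets_nonsingleton n1 noiso' oV neV.
have qsub (W : set (set X)) : W `<=` Fn n -> @qSF X @` (W `&` @nonsingleton X) `<=` SFn n.
  by move=> WF _ [A [WA _] <-]; exists A => //; exact: WF.
have [k [c [Ukc [B [VB nsB] Bc]]]] := SFtr _ _ (qsub _ UF) (qsub _ VF)
  (SFn_open_qSF T2 oU) (SFn_open_qSF T2 oV)
  (image_nonempty _ nsU) (image_nonempty _ nsV).
exists k, B; split=> //; rewrite -{}Bc in Ukc.
exact: (iterZ_img_semiconj_inj (@qSF_semiconj X f) (@qSF_inj X)) Ukc.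
Qed.

Lemma not_Fn_Ztransitive (X : topologicalType) n (g : X -> X) (O1 O2 : set X) :
  (1 < n)%N -> open O1 -> open O2 -> O1 !=set0 -> O2 !=set0 ->
  (forall k, ~ (iterZ_img g k O1 `&` O1 !=set0 /\ iterZ_img g k O1 `&` O2 !=set0)) ->
  ~ Fn_Ztransitive n g.
Proof.
move=> n1 oO1 oO2 [a O1a] [b O2b] sep Ftr.
have oO12 (i : 'I_2) : open (if i == ord0 then O1 else O2) by case: ifP.
have UU0 : vietoris1 O1 `&` Fn n !=set0.
  exists [set a]; split; last exact: Fn_set1 (ltnW n1).
  by apply/vietoris1P; split=> [? ->//|]; exists a.
have VV0 : vietoris2 O1 O2 `&` Fn n !=set0.
  exists [set a; b]; split; last exact: Fn_set2.
  apply/vietoris2P; split.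
  - by move=> ? [->|->]; [left | right].
  - by exists a; split=> //; left.
  - by exists b; split=> //; right.
have [k [B [UkB [VB _]]]] := Ftr _ _
  (@subIsetr _ _ _) (@subIsetr _ _ _) (Fn_open_vietoris n (fun=> oO1))
  (Fn_open_vietoris n oO12) UU0 VV0.
move/vietoris2P: VB => [_ O1B O2B].
have BO1k : B `<=` iterZ_img g k O1.
  by apply: iterZ_img_Fn_map UkB => A [/vietoris1P []].
apply: (sep k); split; [case: O1B | case: O2B] => x [Bx Ox]; exists x; split=> //;
  exact: BO1k.
Qed.

Section swapping_map.
Variables (T : Type) (g : T -> T) (L U : set T).
Hypotheses (gLU : g @` L `<=` U) (gUL : g @` U `<=` L).

Lemma iter_swap j x :
  (L x -> (if odd j then U else L) (iter j g x)) /\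
  (U x -> (if odd j then L else U) (iter j g x)).
Proof.
elim: j => [//|j [IHL IHU]] /=.
by case: (odd j) IHL IHU => /= IHL IHU; split=> [/IHL|/IHU] h;
  [apply: gUL | apply: gLU | apply: gLU | apply: gUL]; exists (iter j g x).
Qed.

Lemma iterZ_img_swap (O1 O2 : set T) :
  O1 `<=` L `\` U -> O2 `<=` U `\` L ->
  forall k, ~ (iterZ_img g k O1 `&` O1 !=set0 /\ iterZ_img g k O1 `&` O2 !=set0).
Proof.
move=> O1LU O2UL [] m.
  move=> [[_ [[a1 Oa1 <-] /O1LU [_ Ua1]]] [_ [[a2 Oa2 <-] /O2UL [_ La2]]]].
  have [/(_ (proj1 (O1LU _ Oa1))) + _] := iter_swap m a1.
  have [/(_ (proj1 (O1LU _ Oa2))) + _] := iter_swap m a2.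
  by case: (odd m).
move=> [[b1 [/O1LU [_ Ub1] /O1LU [Lb1 _]]] [b2 [/O1LU [_ Ub2] /O2UL [Ub2' _]]]].
have [/(_ Lb1) + _] := iter_swap m.+1 b1; have [_ /(_ Ub2')] := iter_swap m.+1 b2.
by case: (odd m.+1).
Qed.

End swapping_map.

Section unit_interval.
Variable R : realType.

Definition itv01 := {x : R | 0 <= x <= 1}.

HB.instance Definition _ := Choice.on itv01.

Definition itv01_dist (x y : itv01) : R := `|val x - val y|.

Lemma itv01_distxx x : itv01_dist x x = 0.
Proof. by rewrite /itv01_dist subrr normr0. Qed.

Lemma itv01_dist_eq0 x y : itv01_dist x y = 0 -> x = y.
Proof. by move/normr0_eq0/eqP; rewrite subr_eq0 => /eqP/val_inj. Qed.

Lemma itv01_dist_sym x y : itv01_dist x y = itv01_dist y x.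
Proof. exact: distrC. Qed.

Lemma itv01_dist_triangle y x z :
  itv01_dist x z <= itv01_dist x y + itv01_dist y z.
Proof. exact: ler_distD. Qed.

HB.instance Definition _ := @isMetric.Build R itv01 itv01_dist
  itv01_distxx itv01_dist_eq0 itv01_dist_sym itv01_dist_triangle.

Lemma itv01_ball (x : itv01) e : ball x e = [set y | `|val x - val y| < e].
Proof. exact: ballEmdist. Qed.

Definition clamp01 (x : R) : R := Num.min 1 (Num.max 0 x).

Lemma clamp01_cases x : [\/ x <= 0 /\ clamp01 x = 0, 1 <= x /\ clamp01 x = 1 |
  0 <= x <= 1 /\ clamp01 x = x].
Proof.
rewrite /clamp01; case: (leP x 0) => [x0|x0]; first by apply: Or31; rewrite (min_r ler01).
case: (leP 1 x) => [x1|x1]; [exact: Or32 | apply: Or33].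
by rewrite (ltW x0) (ltW x1).
Qed.

Lemma clamp01_itv x : 0 <= clamp01 x <= 1.
Proof. by case: (clamp01_cases x) => [[? ->]|[? ->]|[? ->]] //; rewrite ler01 lexx. Qed.

Definition to_itv01 (x : R) : itv01 := exist _ (clamp01 x) (clamp01_itv x).

Lemma to_itv01_continuous : continuous to_itv01.
Proof.
move=> x; apply/cvg_ballP => e e0; apply/nbhs_ballP; exists e => // y.
rewrite itv01_ball /ball_ /= => xy; apply: le_lt_trans xy.
have := ler_norm (x - y); have := ler_norm (y - x); rewrite distrC ler_norml.
by case: (clamp01_cases x) => [[? ->]|[? ->]|[? ->]];
  case: (clamp01_cases y) => [[? ->]|[? ->]|[? ->]] => ? ?; apply/andP; split; lra.
Qed.

Lemma to_itv01_surj : to_itv01 @` `[0, 1] = [set: itv01].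
Proof.
apply/seteqP; split=> // -[x x01] _; exists x; first by rewrite /= in_itv.
apply: val_inj => /=; case/andP: x01 => x0 x1.
by case: (clamp01_cases x) => [[? ->]|[? ->]|[? ->]]; lra.
Qed.

Lemma itv01_continuum : continuum itv01.
Proof.
have cont A := @continuous_subspaceT _ _ A _ to_itv01_continuous.
split; first by exists (to_itv01 0).
rewrite -to_itv01_surj; split.
  by apply: continuous_compact; [exact: cont | exact: segment_compact].
apply: connected_continuous_connected (cont _).
by apply/connected_intervalP; exact: interval_is_interval.
Qed.

Lemma open_itv01_lt (c : R) : open [set x : itv01 | val x < c].
Proof.
rewrite openE => x xc; apply/nbhs_ballP; exists (c - val x) => [|y].
  by rewrite /= subr_gt0.
by rewrite itv01_ball /= ltr_norml => /andP[? ?]; lra.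
Qed.

Lemma open_itv01_gt (c : R) : open [set x : itv01 | c < val x].
Proof.
rewrite openE => x xc; apply/nbhs_ballP; exists (val x - c) => [|y].
  by rewrite /= subr_gt0.
by rewrite itv01_ball /= ltr_norml => /andP[? ?]; lra.
Qed.

End unit_interval.

Section zigzag.
Variable R : realType.
Implicit Types (a b c d x y : R).

Definition zigzag x : R :=
  if x <= 4^-1 then 2^-1 + 2 * x else if x <= 3/4 then 3/2 - 2 * x else 2 * x - 3/2.

Lemma zigzag_cases x : [\/ x <= 4^-1 /\ zigzag x = 2^-1 + 2 * x,
  [/\ 4^-1 <= x, x <= 3/4 & zigzag x = 3/2 - 2 * x] |
  3/4 <= x /\ zigzag x = 2 * x - 3/2].
Proof.
rewrite /zigzag; case: leP => [x1|x1]; first exact: Or31.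
by case: leP => [x2|x2]; [apply: Or32; rewrite (ltW x1) | apply: Or33; rewrite (ltW x2)].
Qed.

Ltac case_zigzag x := case: (zigzag_cases x) => [[? ->]|[? ? ->]|[? ->]].

Lemma zigzag_itv x : 0 <= x <= 1 -> 0 <= zigzag x <= 1.
Proof. by move=> /andP[? ?]; case_zigzag x; apply/andP; split; lra. Qed.

Lemma zigzag_lipschitz x y : `|zigzag x - zigzag y| <= 2 * `|x - y|.
Proof.
have := ler_norm (x - y); have := ler_norm (y - x); rewrite distrC ler_norml.
by case_zigzag x; case_zigzag y => ? ?; apply/andP; split; lra.
Qed.

Lemma zigzag_reflect x : zigzag (1 - x) = 1 - zigzag x.
Proof. by case_zigzag x; case_zigzag (1 - x); lra. Qed.

Lemma iter_zigzag_reflect k x : iter k zigzag (1 - x) = 1 - iter k zigzag x.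
Proof. by elim: k => //= k ->; rewrite zigzag_reflect. Qed.

Lemma zigzag_lower x : 0 <= x -> x <= 2^-1 -> 2^-1 <= zigzag x.
Proof. by move=> ? ?; case_zigzag x; lra. Qed.

Lemma zigzag_upper x : 2^-1 <= x -> x <= 1 -> zigzag x <= 2^-1.
Proof. by move=> ? ?; case_zigzag x; lra. Qed.

Definition covers k a b c d :=
  forall y, c <= y <= d -> exists2 x, a <= x <= b & iter k zigzag x = y.

Lemma covers_trans k j a b c d e g :
  covers k a b c d -> covers j c d e g -> covers (j + k) a b e g.
Proof.
move=> abcd cdeg y /cdeg [z /abcd [x ax <-] <-].
by exists x => //; rewrite iterD.
Qed.

Lemma covers_sub k a b c d a' b' c' d' : covers k a b c d ->
  a' <= a -> b <= b' -> c <= c' -> d' <= d -> covers k a' b' c' d'.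
Proof.
move=> abcd ? ? ? ? y /andP[? ?]; have [|x /andP[? ?] <-] := abcd y.
  by apply/andP; split; lra.
by exists x => //; apply/andP; split; lra.
Qed.

Lemma covers_left a b : b <= 4^-1 -> covers 1%N a b (2^-1 + 2 * a) (2^-1 + 2 * b).
Proof.
move=> ? y /andP[? ?]; exists ((y - 2^-1) / 2); first by apply/andP; split; lra.
by rewrite /= /zigzag ifT; lra.
Qed.

Lemma covers_middle a b :
  4^-1 <= a -> b <= 3/4 -> covers 1%N a b (3/2 - 2 * b) (3/2 - 2 * a).
Proof.
move=> ? ? y /andP[? ?]; exists ((3/2 - y) / 2); first by apply/andP; split; lra.
by rewrite /=; case_zigzag ((3/2 - y) / 2); lra.
Qed.

Lemma covers_right a b : 3/4 <= a -> covers 1%N a b (2 * a - 3/2) (2 * b - 3/2).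
Proof.
move=> ? y /andP[? ?]; exists ((y + 3/2) / 2); first by apply/andP; split; lra.
by rewrite /=; case_zigzag ((y + 3/2) / 2); lra.
Qed.

Lemma covers_reflect k a b c d :
  covers k a b c d -> covers k (1 - b) (1 - a) (1 - d) (1 - c).
Proof.
move=> abcd y /andP[? ?]; have [|x /andP[? ?] xy] := abcd (1 - y).
  by apply/andP; split; lra.
by exists (1 - x); [apply/andP; split; lra | rewrite iter_zigzag_reflect xy; lra].
Qed.

Definition reaches_half a b := exists k, covers k a b 0 2^-1 \/ covers k a b 2^-1 1.

Lemma reaches_half_covers k a b c d :
  covers k a b c d -> reaches_half c d -> reaches_half a b.
Proof.
by move=> abcd [j [cd|cd]]; exists (j + k); [left|right]; exact: covers_trans cd.
Qed.

Lemma reaches_half_sub a b a' b' :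
  reaches_half a b -> a' <= a -> b <= b' -> reaches_half a' b'.
Proof.
by move=> [k [ab|ab]] ? ?; exists k; [left|right]; apply: covers_sub ab _ _ _ _; lra.
Qed.

Lemma reaches_half_reflect a b : reaches_half a b -> reaches_half (1 - b) (1 - a).
Proof.
move=> [k [/covers_reflect ab|/covers_reflect ab]]; exists k; [right|left];
  by apply: covers_sub ab _ _ _ _; lra.
Qed.

Lemma reaches_half_at_half c : 0 < c -> reaches_half (2^-1 - c) 2^-1.
Proof.
move=> c0; have [N cN] : exists N : nat, 4^-1 <= 2 ^+ N * c.
  exists (Num.bound (4^-1 / c)); apply: ltW; rewrite -ltr_pdivrMr //.
  exact: upper_nthrootP.
have wide c' : 4^-1 <= c' -> reaches_half (2^-1 - c') 2^-1.
  move=> ?; exists 1%N; right.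
  by apply: covers_sub (@covers_middle 4^-1 2^-1 _ _) _ _ _ _; lra.
elim: N c c0 cN => [|N IH] c c0 cN; first by apply: wide; rewrite expr0 mul1r in cN.
have [|c4] := leP 4^-1 c; first exact: wide.
have mid : covers 1%N (2^-1 - c) 2^-1 2^-1 (2^-1 + 2 * c).
  by apply: covers_sub (@covers_middle (2^-1 - c) 2^-1 _ _) _ _ _ _; lra.
apply: reaches_half_covers mid _.
have /reaches_half_reflect : reaches_half (2^-1 - 2 * c) 2^-1.
  by apply: IH; [lra | rewrite mulrA -exprSr].
by move/reaches_half_sub; apply; lra.
Qed.

Lemma reaches_half_across_quarter a b : a < 4^-1 -> 4^-1 < b -> reaches_half a b.
Proof.
move=> ? ?; have [a' [aa' a'8 a'4]] : exists a', [/\ a <= a', 8^-1 <= a' & a' < 4^-1].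
  by case: (leP a 8^-1) => ?; [exists 8^-1 | exists a]; split; lra.
have c1 : covers 1%N a b (2^-1 + 2 * a') 1.
  by apply: covers_sub (@covers_left a' 4^-1 _) _ _ _ _; lra.
have c2 : covers 1%N (2^-1 + 2 * a') 1 (4 * a' - 2^-1) 2^-1.
  by apply: covers_sub (@covers_right (2^-1 + 2 * a') 1 _) _ _ _ _; lra.
apply: reaches_half_covers c1 _; apply: reaches_half_covers c2 _.
by apply: reaches_half_sub (reaches_half_at_half (c := 1 - 4 * a') _) _ _; lra.
Qed.

Lemma reaches_half_itv a b : 0 <= a -> a < b -> b <= 1 -> reaches_half a b.
Proof.
move=> a0 ab b1; have [N abN] : exists N : nat, 1 < 2 ^+ N * (b - a).
  exists (Num.bound (b - a)^-1); rewrite -ltr_pdivrMr ?subr_gt0 // div1r.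
  exact: upper_nthrootP.
elim: N a b a0 ab b1 abN => [|N IH] a b a0 ab b1 abN.
  by rewrite expr0 mul1r in abN; lra.
wlog mid : a b a0 ab b1 abN / a + b <= 1.
  move=> wlog; have [|?] := leP (a + b) 1; first exact: wlog.
  have abN' : 1 < 2 ^+ N.+1 * (1 - a - (1 - b)) by rewrite opprB addrC subrKA.
  have : reaches_half (1 - b) (1 - a) by apply: (wlog _ _ _ _ _ abN'); lra.
  by move/reaches_half_reflect/reaches_half_sub; apply; lra.
have IH2 a' b' : 0 <= a' -> a' < b' -> b' <= 1 -> b' - a' = 2 * (b - a) ->
    reaches_half a' b'.
  by move=> ? ? ? e; apply: IH => //; rewrite e mulrA -exprSr.
have [b4|b4] := leP b 4^-1.
  by apply: reaches_half_covers (@covers_left a b b4) _; apply: IH2; lra.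
have [a4|a4] := ltP a 4^-1; first exact: reaches_half_across_quarter.
by apply: reaches_half_covers (@covers_middle a b a4 _) _; [lra | apply: IH2; lra].
Qed.

Lemma reaches_half_hits a b y : reaches_half a b -> 0 <= y <= 1 ->
  exists j, exists2 x, a <= x <= b & iter j zigzag x = y.
Proof.
have lower_upper : covers 1%N 0 2^-1 2^-1 1.
  by apply: covers_sub (@covers_left 0 4^-1 _) _ _ _ _; lra.
have upper_lower : covers 1%N 2^-1 1 0 2^-1.
  by apply: covers_sub (@covers_middle 2^-1 (3/4) _ _) _ _ _ _; lra.
move=> [k abk] /andP[y0 y1].
have [j [j' [lo up]]] : exists j j', covers j a b 0 2^-1 /\ covers j' a b 2^-1 1.
  case: abk => abk; [exists k, (1 + k)%N | exists (1 + k)%N, k];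
    by split=> //; apply: covers_trans abk _.
have [y2|y2] := leP y 2^-1; [exists j; apply: lo | exists j'; apply: up];
  by apply/andP; split; lra.
Qed.

End zigzag.

Section zigzag_on_unit_interval.
Variable R : realType.

Definition zigzag01 (x : itv01 R) : itv01 R :=
  exist _ (zigzag (val x)) (zigzag_itv (valP x)).

Lemma val_iter_zigzag01 j x : val (iter j zigzag01 x) = iter j (@zigzag R) (val x).
Proof. by elim: j => //= j ->. Qed.

Lemma zigzag01_continuous : continuous zigzag01.
Proof.
move=> x; apply/(@cvg_ballP _ _ _ _ (nbhs_filter x)) => e e0.
apply/nbhs_ballP; exists (e / 2) => [|y]; first by rewrite /= divr_gt0.
rewrite /= !itv01_ball /= => xy; apply: le_lt_trans (zigzag_lipschitz _ _) _; lra.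
Qed.

Lemma zigzag01_Ztransitive : Ztransitive zigzag01.
Proof.
move=> U V _ _ oU oV [u Uu] [v Vv].
have /nbhs_ballP[e /= e0 ballU] : nbhs u U by rewrite openE in oU; exact: oU.
have [a [b [a0 ab b1 abU]]] : exists a b, [/\ 0 <= a, a < b, b <= 1 &
    forall x, a <= x <= b -> `|val u - x| < e].
  have [d [d0 de d4]] : exists d, [/\ 0 < d, d < e & d <= 4^-1].
    by case: (leP (e / 2) 4^-1) => ?; [exists (e / 2) | exists 4^-1]; split; lra.
  case: u {Uu ballU} => u /= /andP[u0 u1].
  have [?|?] := leP u 2^-1; [exists u, (u + d) | exists (u - d), u];
    by split; try lra; move=> x /andP[? ?]; rewrite ltr_norml; apply/andP; split; lra.
have [j [x /andP[ax xb] xv]] := reaches_half_hits (reaches_half_itv a0 ab b1) (valP v).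
have x01 : 0 <= x <= 1 by apply/andP; split; lra.
exists (Posz j), v; split=> //; exists (exist _ x x01).
  by apply: ballU; rewrite itv01_ball /=; apply: abU; rewrite ax xb.
by apply: val_inj; rewrite val_iter_zigzag01.
Qed.

Lemma zigzag01_not_Fn_Ztransitive n : (1 < n)%N -> ~ Fn_Ztransitive n zigzag01.
Proof.
move=> n1; have zero01 : 0 <= (0 : R) <= 1 by rewrite lexx ler01.
have one01 : 0 <= (1 : R) <= 1 by rewrite ler01 lexx.
apply: (not_Fn_Ztransitive n1 (@open_itv01_lt R 4^-1) (@open_itv01_gt R (3/4))).
- by exists (exist _ 0 zero01) => /=; lra.
- by exists (exist _ 1 one01) => /=; lra.
apply: (@iterZ_img_swap _ _ [set x | val x <= 2^-1] [set x | 2^-1 <= val x]).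
- by move=> _ [x /= x2 <-] /=; apply: zigzag_lower x2; case/andP: (valP x).
- by move=> _ [x /= x2 <-] /=; apply: zigzag_upper x2 _; case/andP: (valP x).
- by move=> x /= ?; split=> /=; lra.
- by move=> x /= ?; split=> /=; lra.
Qed.

End zigzag_on_unit_interval.

Theorem theorem4 (R : realType) :
  (forall (X : metricType R) (n : nat) (f : X -> X),
      continuum X -> (2 <= n)%N -> continuous f ->
      (Fn_Ztransitive n f <-> SFn_Ztransitive n f) /\
      (Fn_Ztransitive n f -> Ztransitive f)) /\
  (exists (X : metricType R) (n : nat) (f : X -> X),
      continuum X /\ (2 <= n)%N /\ continuous f /\
      Ztransitive f /\ ~ Fn_Ztransitive n f).
Proof.
split=> [X n f [_ [_ cX]] n2 _|].
  split; last exact: Fn_Ztransitive_Ztransitive (ltnW n2).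
  split; first exact: Fn_SFn_Ztransitive.
  exact: SFn_Fn_Ztransitive (@metric_hausdorff _ X) cX n2.
exists (itv01 R), 2%N, (@zigzag01 R); split; first exact: itv01_continuum.
split=> //; split; first exact: zigzag01_continuous.
by split; [exact: zigzag01_Ztransitive | exact: zigzag01_not_Fn_Ztransitive].
Qed.
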